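(* Let $n \ge 1$, $t \ge 1$ and $\ell \ge 1$ be integers. Fix a set of nonterminal symbols $V = \{\mathtt{NT}_1, \dotsc, \mathtt{NT}_n\}$, a distinguished start symbol $S \notin V$, and a terminal alphabet $\Sigma = \{\mathtt{t}_1, \dotsc, \mathtt{t}_t\}$ with $|\Sigma| = t$. Then the number of distinct reduced context-free grammars in Chomsky normal form with start symbol $S$, nonterminals $V$ and terminals $\Sigma$ is at least $2^{n^3 + nt - 2n}$, and the number of distinct strings of length $\ell$ over $\Sigma$ is $t^\ell$.
   Context: A context-free grammar in Chomsky normal form here consists of a finite set of production rules, each either lexical, of the form $A \to a$ with $A \in V$ and $a \in \Sigma$, or nonlexical, of the form $A \to B\,C$ with $A \in \{S\} \cup V$ and $B, C \in V$. Two grammars (over the same fixed $S$, $V$, $\Sigma$) are distinct iff their sets of production rules differ. A grammar is reduced if every nonterminal in $V$ is accessible (appears in some derivation starting from $S$) and productive (derives some string of terminals). *)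

From Stdlib Require Import Relations.
From mathcomp Require Import all_boot.
From mathcomp Require Import boolp.
Set Implicit Arguments. Unset Strict Implicit. Unset Printing Implicit Defensive.

(* Nonterminals: [option 'I_n], with [None] = the start symbol S and
   [Some i] = NT_(i+1) in V.  Terminals: ['I_t]. *)
Definition nonterm (n : nat) := option 'I_n.

(* Production rules in Chomsky normal form:
   - lexical  [inl (A, a)]     :  A -> a      with A in V, a in Sigma
   - nonlexical [inr (A, B, C)]:  A -> B C    with A in {S} u V, B, C in V *)
Definition rule (n t : nat) : finType :=
  ('I_n * 'I_t + option 'I_n * 'I_n * 'I_n)%type.

Definition grammar (n t : nat) := {set rule n t}.

Definition symbol (n t : nat) := (nonterm n + 'I_t)%type.

Definition lhs {n t : nat} (r : rule n t) : nonterm n :=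
  match r with
  | inl (A, _) => Some A
  | inr (A, _, _) => A
  end.

Definition rhs {n t : nat} (r : rule n t) : seq (symbol n t) :=
  match r with
  | inl (_, a) => [:: inr a]
  | inr (_, B, C) => [:: inl (Some B); inl (Some C)]
  end.

Definition step {n t : nat} (G : grammar n t) (x y : seq (symbol n t)) : Prop :=
  exists (u w : seq (symbol n t)) (r : rule n t),
    r \in G /\ x = u ++ inl (lhs r) :: w /\ y = u ++ rhs r ++ w.

Definition derives {n t : nat} (G : grammar n t) := clos_refl_trans _ (step G).

Definition accessible {n t : nat} (G : grammar n t) (X : nonterm n) : Prop :=
  exists u w, derives G [:: inl None] (u ++ inl X :: w).

Definition productive {n t : nat} (G : grammar n t) (X : nonterm n) : Prop :=
  exists s : seq 'I_t, derives G [:: inl X] (map inr s).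

Definition reduced {n t : nat} (G : grammar n t) : Prop :=
  forall A : 'I_n, accessible G (Some A) /\ productive G (Some A).

From mathcomp Require Import all_boot.
From mathcomp Require Import boolp.
From mathcomp Require Import zify.
From Stdlib Require Import Relations.

(* Fix a terminal [a].  Every grammar containing the 2n rules [A -> a] and
   [S -> A A] (A in V) is reduced: each A is reached in one step from S and
   derives [a] in one step.  The number of such grammars is the number of
   subsets of the remaining at least [n t + (n+1) n^2 - 2n] rules, and
   [n^3 <= (n+1) n^2]. *)

Lemma card_supersets (T : finType) (C : {set T}) :
  #|[set X : {set T} | C \subset X]| = 2 ^ #|~: C|.
Proof.
have -> : [set X : {set T} | C \subset X] = (fun Y => Y :|: C) @: powerset (~: C).
  apply/setP => X; rewrite inE; apply/idP/imsetP => [CX | [Y _ ->]].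
  - exists (X :&: ~: C); first by rewrite inE subsetIr.
    by rewrite setUIl [~: C :|: C]setUC setUCr setIT; apply/esym/setUidPl.
  - exact: subsetUr.
have restrictK (Y : {set T}) : Y \subset ~: C -> (Y :|: C) :&: ~: C = Y.
  by move/setIidPl; rewrite setIUl setICr setU0.
rewrite card_in_imset ?card_powerset // => Y Z; rewrite !inE => sY sZ YZ.
by rewrite -(restrictK Y sY) YZ restrictK.
Qed.

Section CoreGrammar.

Variables n t : nat.

Definition core_grammar (a : 'I_t) : grammar n t :=
  [set inl (A, a) | A : 'I_n] :|: [set inr (None, A, A) | A : 'I_n].

Lemma card_core_grammar (a : 'I_t) : #|core_grammar a| <= 2 * n.
Proof.
rewrite mul2n -addnn; apply: leq_trans (leq_card_setU _ _) _.
by apply: leq_add; apply: leq_trans (leq_imset_card _ _) _; rewrite card_ord.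
Qed.

Lemma card_rule : #|{: rule n t}| = n * t + n.+1 * n * n.
Proof. by rewrite /rule card_sum !card_prod card_option !card_ord. Qed.

Lemma derives_rule (G : grammar n t) (r : rule n t) :
  r \in G -> derives G [:: inl (lhs r)] (rhs r).
Proof. by move=> rG; apply: rt_step; exists [::], [::], r; rewrite cats0. Qed.

Lemma reduced_core_supset (a : 'I_t) (G : grammar n t) :
  core_grammar a \subset G -> reduced G.
Proof.
move=> /subsetP coreG A; split.
- exists [::], [:: inl (Some A)]; apply: (derives_rule _ (inr (None, A, A))).
  by apply: coreG; rewrite inE; apply/orP; right; apply/imsetP; exists A.
- exists [:: a]; apply: (derives_rule _ (inl (A, a))).
  by apply: coreG; rewrite inE; apply/orP; left; apply/imsetP; exists A.
Qed.

End CoreGrammar.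

Theorem lemma1 (n t l : nat) (hn : 1 <= n) (ht : 1 <= t) (hl : 1 <= l) :
  2 ^ (n ^ 3 + n * t - 2 * n) <= #|[set G : grammar n t | `[< reduced G >]]|
  /\ #|{: l.-tuple 'I_t}| = t ^ l.
Proof.
split; last by rewrite card_tuple card_ord.
pose a : 'I_t := Ordinal ht.
have supsets_reduced : [set G : grammar n t | core_grammar n t a \subset G]
                       \subset [set G : grammar n t | `[< reduced G >]].
  apply/subsetP => G; rewrite !inE => coreG.
  by apply/asboolP; exact: reduced_core_supset coreG.
apply: leq_trans (subset_leq_card supsets_reduced).
rewrite card_supersets cardsCs setCK card_rule leq_exp2l //.
have := card_core_grammar n t a.
have : n ^ 3 <= n.+1 * n * n by rewrite !expnS expn0 muln1 mulnA !leq_mul2r leqnSn !orbT.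
lia.
Qed.
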